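(* Let $a,c\in[0,1]$ with $a\neq\frac12$, $c\neq\frac12$, and define $f_{a,c}:[0,1]\to[0,1]$ by $$f_{a,c}(x)=\begin{cases}(1-2a)x^2+2ax, & x\in[0,\frac13],\\ x, & x\in(\frac13,\frac23),\\ (1-2c)x^2+2cx, & x\in[\frac23,1].\end{cases}$$ Let $f^n$ denote the $n$-fold composition of $f=f_{a,c}$ with itself and $x^{(n)}=f^n(x^{(0)})$. Then: 1. The set of fixed points of $f_{a,c}$ is $(\frac13,\frac23)\cup\{0,1\}$. 2. If $0\le a<\frac12$ and $0\le c<\frac12$, then for every $x^{(0)}\in[\frac23,1)$ there exist $n\in\mathbb N$ and $p\in[\frac49(1+c),\frac23)$ such that $f^n(x^{(0)})=p$ and $f^{n+1}(x^{(0)})=f(p)=p$. 3. If $0\le a<\frac12$ (and $c\ne\frac12$ arbitrary), then $\lim_{n\to\infty}x^{(n)}=0$ for all $x^{(0)}\in[0,\frac13]$. 4. If $\frac12<c\le1$ (and $a\ne\frac12$ arbitrary), then $\lim_{n\to\infty}x^{(n)}=1$ for all $x^{(0)}\in[\frac23,1]$. 5. If $\frac12<a\le1$ and $0\le c<\frac12$, then for every $x^{(0)}\in(0,\frac13]$ (respectively $x^{(0)}\in[\frac23,1)$) there exist $n\in\mathbb N$ and $p\in(\frac13,\frac19(4a+1)]$ (respectively $p\in[\frac49(1+c),\frac23)$) such that $f^n(x^{(0)})=p$ and $f^{n+1}(x^{(0)})=f(p)=p$. 6. If $\frac12<a\le1$ and $\frac12<c\le1$, then for every $x^{(0)}\in(0,\frac13]$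 there exist $n\in\mathbb N$ and $p\in(\frac13,\frac19(4a+1)]$ such that $f^n(x^{(0)})=p$ and $f^{n+1}(x^{(0)})=f(p)=p$.
   Context: This map is the reduction to $[0,1]$ of the quadratic stochastic operator $x'=x^2+2p(x)xy$, $y'=2(1-p(x))xy+y^2$ (with $y=1-x$), where $p(x)=a$ for $x\le\frac13$, $b$ for $\frac13<x<\frac23$, $c$ for $x\ge\frac23$, in the case $b=\frac12$. *)

From Stdlib Require Import Reals.
Open Scope R_scope.

(* The reduced quadratic stochastic operator f_{a,c} on [0,1] (case b = 1/2). *)
Definition f_ac (a c x : R) : R :=
  if Rle_dec x (1/3) then (1 - 2*a) * x^2 + 2*a*x
  else if Rlt_dec x (2/3) then x
  else (1 - 2*c) * x^2 + 2*c*x.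

Definition f_iter (a c : R) (n : nat) (x : R) : R := Nat.iter n (f_ac a c) x.

(** Outside the middle third, f is one of the quadratic maps
    [qmap k x = x + (2k - 1) x (1 - x)], which fix only 0 and 1 and push every
    interior point monotonically towards 0 (if k < 1/2) or towards 1 (if k > 1/2),
    while the middle third is pointwise fixed.  Moving towards an attracting end
    point, the orbit contracts geometrically (ratio [qmap k (1/3) / (1/3)] near 0,
    resp. [(1 - qmap k (2/3)) / (1/3)] near 1).  Moving towards the middle third,
    each step advances by at least [|2k - 1| x (1 - x)], which is bounded below
    along the orbit, so it enters the middle third after finitely many steps;
    since [qmap] is monotone, it lands in [(1/3, qmap a (1/3)]] or
    [[qmap c (2/3), 2/3)] and stays there forever. *)

From Stdlib Require Import Reals Lra Psatz.
Open Scope R_scope.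

Definition qmap (k x : R) : R := (1 - 2*k) * x^2 + 2*k*x.

Lemma qmap_sub_id k x : qmap k x - x = (2*k - 1) * (x * (1 - x)).
Proof. unfold qmap; ring. Qed.

Lemma qmap_fixed_iff k x : k <> 1/2 -> qmap k x = x <-> x = 0 \/ x = 1.
Proof.
  intros hk; split.
  - intros E.
    assert (E0 : (2*k - 1) * (x * (1 - x)) = 0) by (rewrite <- qmap_sub_id; lra).
    destruct (Rmult_integral _ _ E0) as [E1 | E1]; [lra |].
    destruct (Rmult_integral _ _ E1); lra.
  - intros [-> | ->]; unfold qmap; ring.
Qed.

Lemma qmap_le_monotone k x y : 0 <= k <= 1 -> 0 <= x <= y -> y <= 1 ->
  qmap k x <= qmap k y.
Proof.
  intros hk hxy hy.
  assert (slope : 0 <= (1 - 2*k) * (x + y) + 2*k) by nra.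
  replace (qmap k y) with (qmap k x + (y - x) * ((1 - 2*k) * (x + y) + 2*k))
    by (unfold qmap; ring).
  nra.
Qed.

Lemma f_ac_low a c x : x <= 1/3 -> f_ac a c x = qmap a x.
Proof. intros hx; unfold f_ac; destruct (Rle_dec x (1/3)); [reflexivity | lra]. Qed.

Lemma f_ac_mid a c x : 1/3 < x < 2/3 -> f_ac a c x = x.
Proof.
  intros hx; unfold f_ac.
  destruct (Rle_dec x (1/3)); [lra |].
  destruct (Rlt_dec x (2/3)); [reflexivity | lra].
Qed.

Lemma f_ac_high a c x : 2/3 <= x -> f_ac a c x = qmap c x.
Proof.
  intros hx; unfold f_ac.
  destruct (Rle_dec x (1/3)); [lra |].
  destruct (Rlt_dec x (2/3)); [lra | reflexivity].
Qed.

Lemma f_ac_fixed_iff a c x : a <> 1/2 -> c <> 1/2 -> 0 <= x <= 1 ->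
  f_ac a c x = x <-> (1/3 < x < 2/3) \/ x = 0 \/ x = 1.
Proof.
  intros ha hc hx.
  destruct (Rle_dec x (1/3)).
  - rewrite f_ac_low, qmap_fixed_iff by assumption; lra.
  - destruct (Rlt_dec x (2/3)).
    + rewrite f_ac_mid by lra; lra.
    + rewrite f_ac_high, qmap_fixed_iff by (assumption || lra); lra.
Qed.

Lemma iter_exits (g : R -> R) (A B : R -> Prop) (V : R -> R) (d : R) :
  0 < d ->
  (forall x, A x -> A (g x) \/ B (g x)) ->
  (forall x, A x -> 0 <= V x) ->
  (forall x, A x -> V (g x) <= V x - d) ->
  forall x, A x -> exists n, B (Nat.iter (S n) g x).
Proof.
  intros hd hstep hV hdecr.
  assert (bounded : forall N x, A x -> V x < INR N * d ->
                    exists n, B (Nat.iter (S n) g x)).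
  { induction N as [| N IH]; intros x hx hVx.
    - simpl in hVx; specialize (hV x hx); lra.
    - destruct (hstep x hx) as [hgx | hgx].
      + rewrite S_INR in hVx.
        destruct (IH (g x) hgx) as [n hn]; [specialize (hdecr x hx); lra |].
        exists (S n); rewrite Nat.iter_succ_r; exact hn.
      + exists 0%nat; exact hgx. }
  intros x hx.
  destruct (INR_archimed d (V x) hd) as [N hN].
  exact (bounded N x hx hN).
Qed.

Lemma iter_contraction_cvg (g : R -> R) (A : R -> Prop) (l q : R) :
  0 <= q < 1 ->
  (forall x, A x -> A (g x) /\ Rabs (g x - l) <= q * Rabs (x - l)) ->
  forall x, A x -> Un_cv (fun n => Nat.iter n g x) l.
Proof.
  intros hq hg x hx.
  assert (geometric : forall n, A (Nat.iter n g x) /\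
                      Rabs (Nat.iter n g x - l) <= q^n * Rabs (x - l)).
  { induction n as [| n [hAn hn]]; simpl.
    - split; [exact hx | lra].
    - destruct (hg _ hAn) as [hA hle]; split; [exact hA |].
      assert (hqn := Rmult_le_compat_l q _ _ (proj1 hq) hn); lra. }
  intros eps heps.
  assert (hx0 : 0 <= Rabs (x - l)) by apply Rabs_pos.
  destruct (pow_lt_1_zero q ltac:(rewrite Rabs_pos_eq; lra)
              (eps / (Rabs (x - l) + 1)) ltac:(apply Rdiv_lt_0_compat; lra))
    as [N hN].
  exists N; intros n hn; unfold R_dist.
  specialize (hN n hn); rewrite Rabs_pos_eq in hN by (apply pow_le; lra).
  assert (heps' : eps / (Rabs (x - l) + 1) * (Rabs (x - l) + 1) = eps)
    by (field; lra).
  assert (hqn : 0 <= q^n) by (apply pow_le; lra).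
  destruct (geometric n) as [_ hle]; nra.
Qed.

Lemma qmap_contraction_at_0 a y : 0 <= a < 1/2 -> 0 <= y <= 1/3 ->
  0 <= qmap a y <= (1 + 4*a) / 3 * y.
Proof.
  intros ha hy.
  assert (slope : 0 <= (1 - 2*a) * y + 2*a <= (1 + 4*a) / 3) by nra.
  replace (qmap a y) with (y * ((1 - 2*a) * y + 2*a)) by (unfold qmap; ring).
  split; nra.
Qed.

Lemma qmap_contraction_at_1 c y : 1/2 < c <= 1 -> 2/3 <= y <= 1 ->
  y <= qmap c y <= 1 /\ 1 - qmap c y <= (5 - 4*c) / 3 * (1 - y).
Proof.
  intros hc hy.
  assert (above : y <= qmap c y).
  { assert (E := qmap_sub_id c y).
    assert (0 <= (2*c - 1) * (y * (1 - y))) by (apply Rmult_le_pos; nra).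
    lra. }
  assert (factor : 0 <= 1 - (2*c - 1) * y <= (5 - 4*c) / 3) by nra.
  assert (E : 1 - qmap c y = (1 - y) * (1 - (2*c - 1) * y)) by (unfold qmap; ring).
  split; [split; [exact above |] |].
  - assert (0 <= (1 - y) * (1 - (2*c - 1) * y)) by (apply Rmult_le_pos; lra).
    lra.
  - rewrite E, (Rmult_comm _ (1 - y)).
    apply Rmult_le_compat_l; lra.
Qed.

Lemma qmap_step_up a x0 x : 1/2 < a <= 1 -> 0 < x0 <= x -> x <= 1/3 ->
  x + (2*a - 1) * x0 * (2/3) <= qmap a x <= (4*a + 1) / 9.
Proof.
  intros ha hx0 hx.
  assert (ceiling : qmap a x <= qmap a (1/3)) by (apply qmap_le_monotone; lra).
  replace (qmap a (1/3)) with ((4*a + 1) / 9) in ceiling by (unfold qmap; field).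
  assert (E := qmap_sub_id a x).
  assert (gain : 0 <= (2*a - 1) * (x * (1 - x) - x0 * (2/3)))
    by (apply Rmult_le_pos; nra).
  split; lra.
Qed.

Lemma qmap_step_down c x0 x : 0 <= c < 1/2 -> 2/3 <= x <= x0 -> x0 < 1 ->
  4/9 * (1 + c) <= qmap c x <= x - (1 - 2*c) * (2/3) * (1 - x0).
Proof.
  intros hc hx hx0.
  assert (floor : qmap c (2/3) <= qmap c x) by (apply qmap_le_monotone; lra).
  replace (qmap c (2/3)) with (4/9 * (1 + c)) in floor by (unfold qmap; field).
  assert (E := qmap_sub_id c x).
  assert (loss : 0 <= (1 - 2*c) * (x * (1 - x) - (2/3) * (1 - x0)))
    by (apply Rmult_le_pos; nra).
  split; lra.
Qed.

Definition settles_in (a c : R) (P : R -> Prop) (x : R) : Prop :=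
  exists (n : nat) (p : R), P p /\
    f_iter a c n x = p /\ f_iter a c (S n) x = f_ac a c p /\ f_ac a c p = p.

Lemma settles_in_of_reach_mid a c (P : R -> Prop) x :
  (forall p, P p -> 1/3 < p < 2/3) ->
  (exists n, P (f_iter a c n x)) -> settles_in a c P x.
Proof.
  intros hP [n hn].
  exists n, (f_iter a c n x); repeat split; try exact hn.
  apply f_ac_mid, hP, hn.
Qed.

Lemma settles_from_low a c x0 : 1/2 < a <= 1 -> 0 < x0 <= 1/3 ->
  settles_in a c (fun p => 1/3 < p <= 1/9 * (4*a + 1)) x0.
Proof.
  intros ha hx0.
  apply settles_in_of_reach_mid; [intros p hp; lra |].
  destruct (iter_exits (f_ac a c) (fun x => x0 <= x <= 1/3)
              (fun p => 1/3 < p <= 1/9 * (4*a + 1)) (fun x => 1/3 - x)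
              ((2*a - 1) * x0 * (2/3))) with (x := x0) as [n hn].
  - nra.
  - intros x hx; rewrite f_ac_low by lra.
    destruct (qmap_step_up a x0 x); nra.
  - intros x hx; lra.
  - intros x hx; rewrite f_ac_low by lra.
    destruct (qmap_step_up a x0 x); lra.
  - lra.
  - exists (S n); exact hn.
Qed.

Lemma settles_from_high a c x0 : 0 <= c < 1/2 -> 2/3 <= x0 < 1 ->
  settles_in a c (fun p => 4/9 * (1 + c) <= p < 2/3) x0.
Proof.
  intros hc hx0.
  apply settles_in_of_reach_mid; [intros p hp; lra |].
  destruct (iter_exits (f_ac a c) (fun x => 2/3 <= x <= x0)
              (fun p => 4/9 * (1 + c) <= p < 2/3) (fun x => x - 2/3)
              ((1 - 2*c) * (2/3) * (1 - x0))) with (x := x0) as [n hn].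
  - nra.
  - intros x hx; rewrite f_ac_high by lra.
    destruct (qmap_step_down c x0 x); nra.
  - intros x hx; lra.
  - intros x hx; rewrite f_ac_high by lra.
    destruct (qmap_step_down c x0 x); lra.
  - lra.
  - exists (S n); exact hn.
Qed.

Lemma f_iter_cvg_0 a c x0 : 0 <= a < 1/2 -> 0 <= x0 <= 1/3 ->
  Un_cv (fun n => f_iter a c n x0) 0.
Proof.
  intros ha hx0.
  apply (iter_contraction_cvg _ (fun y => 0 <= y <= 1/3) 0 ((1 + 4*a) / 3));
    [lra | | exact hx0].
  intros y hy; rewrite f_ac_low by lra.
  destruct (qmap_contraction_at_0 a y ha hy).
  rewrite !Rminus_0_r, !Rabs_pos_eq by lra.
  split; nra.
Qed.

Lemma f_iter_cvg_1 a c x0 : 1/2 < c <= 1 -> 2/3 <= x0 <= 1 ->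
  Un_cv (fun n => f_iter a c n x0) 1.
Proof.
  intros hc hx0.
  apply (iter_contraction_cvg _ (fun y => 2/3 <= y <= 1) 1 ((5 - 4*c) / 3));
    [lra | | exact hx0].
  intros y hy; rewrite f_ac_high by lra.
  destruct (qmap_contraction_at_1 c y hc hy) as [hbetween hle].
  rewrite !(Rabs_minus_sym _ 1), !Rabs_pos_eq by lra.
  split; lra.
Qed.

Theorem theorem2p6 (a c : R) :
  0 <= a <= 1 -> 0 <= c <= 1 -> a <> 1/2 -> c <> 1/2 ->
  (* 1. fixed points *)
  (forall x, 0 <= x <= 1 ->
     (f_ac a c x = x <-> ((1/3 < x < 2/3) \/ x = 0 \/ x = 1))) /\
  (* 2. *)
  (0 <= a < 1/2 -> 0 <= c < 1/2 ->
     forall x0, 2/3 <= x0 < 1 ->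
       exists (n : nat) (p : R), 4/9 * (1 + c) <= p < 2/3 /\
         f_iter a c n x0 = p /\ f_iter a c (S n) x0 = f_ac a c p /\ f_ac a c p = p) /\
  (* 3. *)
  (0 <= a < 1/2 ->
     forall x0, 0 <= x0 <= 1/3 -> Un_cv (fun n => f_iter a c n x0) 0) /\
  (* 4. *)
  (1/2 < c <= 1 ->
     forall x0, 2/3 <= x0 <= 1 -> Un_cv (fun n => f_iter a c n x0) 1) /\
  (* 5. *)
  (1/2 < a <= 1 -> 0 <= c < 1/2 ->
     (forall x0, 0 < x0 <= 1/3 ->
       exists (n : nat) (p : R), 1/3 < p <= 1/9 * (4*a + 1) /\
         f_iter a c n x0 = p /\ f_iter a c (S n) x0 = f_ac a c p /\ f_ac a c p = p) /\
     (forall x0, 2/3 <= x0 < 1 ->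
       exists (n : nat) (p : R), 4/9 * (1 + c) <= p < 2/3 /\
         f_iter a c n x0 = p /\ f_iter a c (S n) x0 = f_ac a c p /\ f_ac a c p = p)) /\
  (* 6. *)
  (1/2 < a <= 1 -> 1/2 < c <= 1 ->
     forall x0, 0 < x0 <= 1/3 ->
       exists (n : nat) (p : R), 1/3 < p <= 1/9 * (4*a + 1) /\
         f_iter a c n x0 = p /\ f_iter a c (S n) x0 = f_ac a c p /\ f_ac a c p = p).
Proof.
  intros _ _ ha hc.
  split; [intros x hx; exact (f_ac_fixed_iff a c x ha hc hx) |].
  split; [intros _ hc' x0; exact (settles_from_high a c x0 hc') |].
  split; [intros ha' x0; exact (f_iter_cvg_0 a c x0 ha') |].
  split; [intros hc' x0; exact (f_iter_cvg_1 a c x0 hc') |].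
  split.
  - intros ha' hc'; split; intros x0.
    + exact (settles_from_low a c x0 ha').
    + exact (settles_from_high a c x0 hc').
  - intros ha' _ x0; exact (settles_from_low a c x0 ha').
Qed.
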